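(* Let $G$ be a graph in which every vertex belongs to a simplicial clique, and let $S$ be a degree-greedy stable set in $G$. Then every vertex of $S$ is simplicial, and $S$ contains exactly one vertex of each simplicial clique of $G$.
   Context: A vertex $v$ is simplicial if $N[v]$ is a clique; a clique is simplicial if it equals $N[v]$ for a simplicial vertex $v$. For a linear order $\sigma=(v_1,\dots,v_n)$ of $V(G)$, the $\sigma$-greedy stable set is obtained by scanning $v_1,\dots,v_n$ in order, starting with $S=\emptyset$, and adding $v_i$ to $S$ whenever $S\cup\{v_i\}$ is stable. A degree-greedy stable set is a $\sigma$-greedy stable set for some order $\sigma$ with $d_G(v_i)\le d_G(v_j)$ whenever $i<j$ (degrees taken in $G$). *)

(* A finite simple graph is a symmetric irreflexive relation
   e : rel T on a finite type T. *)
From mathcomp Require Import all_boot.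
Set Implicit Arguments. Unset Strict Implicit. Unset Printing Implicit Defensive.

Section Graph.
Variables (T : finType) (e : rel T).

Definition cnbhd (v : T) : {set T} := [set u | (u == v) || e v u].

Definition deg (v : T) : nat := #|[set u | e v u]|.

Definition is_clique (K : {set T}) : Prop :=
  forall x y, x \in K -> y \in K -> x != y -> e x y.

Definition stableb (S : {set T}) : bool :=
  [forall x in S, forall y in S, ~~ e x y].

Definition simplicial (v : T) : Prop := is_clique (cnbhd v).

Definition simplicial_clique (K : {set T}) : Prop :=
  exists2 v, simplicial v & K = cnbhd v.

Definition greedy_stable (sigma : seq T) : {set T} :=
  foldl (fun S v => if stableb (v |: S) then v |: S else S) set0 sigma.

Definition linear_order (sigma : seq T) : Prop := perm_eq sigma (enum T).

Definition degree_order (sigma : seq T) : Prop :=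
  linear_order sigma /\ pairwise (fun x y => deg x <= deg y) sigma.

Definition degree_greedy_stable (S : {set T}) : Prop :=
  exists2 sigma, degree_order sigma & S = greedy_stable sigma.

End Graph.

From mathcomp Require Import all_boot.
Set Implicit Arguments. Unset Strict Implicit. Unset Printing Implicit Defensive.

(* Let S be the greedy stable set of a degree order sigma.
   - S is stable, so it meets every clique in at most one vertex.
   - Greedy domination: if sigma = p ++ w :: q, then already after scanning
     p ++ [w] the greedy set contains a vertex of N[w]; this vertex lies in
     p ++ [w] and stays in S.  Hence S meets every N[w], and in particular
     every simplicial clique exactly once.
   - Let v be in S and w a simplicial vertex with v in N[w].  Then
     N[w] is a clique containing v, so N[w] is included in N[v] and
     deg w <= deg v.  If deg w < deg v, then w comes before v in sigma and
     greedy domination gives a vertex u of S in N[w] scanned no later than w;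
     u and v are both in the clique N[w], so u = v, a contradiction.  Thus
     deg v = deg w, N[v] = N[w] by cardinality, and v is simplicial. *)

Section GreedyStable.
Variables (T : finType) (e : rel T).
Hypothesis e_sym : symmetric e.
Hypothesis e_irr : irreflexive e.

Definition greedy_step (S : {set T}) (v : T) : {set T} :=
  if stableb e (v |: S) then v |: S else S.

Lemma greedy_stableE (s : seq T) : greedy_stable e s = foldl greedy_step set0 s.
Proof. by []. Qed.

Lemma stableP (S : {set T}) :
  reflect (forall x y, x \in S -> y \in S -> ~~ e x y) (stableb e S).
Proof.
apply: (iffP forallP) => [H x y xS yS | H x].
  by have /implyP/(_ xS)/forallP/(_ y)/implyP/(_ yS) := H x.
by apply/implyP => xS; apply/forallP => y; apply/implyP => yS; exact: H.
Qed.

Lemma stable_set0 : stableb e set0.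
Proof. by apply/stableP => x y; rewrite inE. Qed.

Lemma greedy_sub (s : seq T) (S0 : {set T}) : S0 \subset foldl greedy_step S0 s.
Proof.
elim: s S0 => [|x s IH] S0 /=; first exact: subxx.
apply: subset_trans (IH _); rewrite /greedy_step; case: ifP => // _.
exact: subsetUr.
Qed.

Lemma greedy_mem (s : seq T) (S0 : {set T}) (y : T) :
  y \in foldl greedy_step S0 s -> (y \in S0) || (y \in s).
Proof.
elim: s S0 => [|x s IH] S0 /=; first by move=> ->.
move/IH; rewrite /greedy_step in_cons; case: ifP => _; rewrite ?in_setU1.
  by case/orP => [/orP[]|] ->; rewrite ?orbT.
by case/orP => ->; rewrite ?orbT.
Qed.

Lemma greedy_stable_stable (s : seq T) (S0 : {set T}) :
  stableb e S0 -> stableb e (foldl greedy_step S0 s).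
Proof.
elim: s S0 => [|x s IH] S0 //= st0; apply: IH.
by rewrite /greedy_step; case: ifP.
Qed.

(* After scanning x, the current set contains a vertex of N[x]: either x was
   added, or adding it failed because of a neighbour already present. *)
Lemma greedy_step_dom (S0 : {set T}) (x : T) : stableb e S0 ->
  exists2 u, u \in greedy_step S0 x & u \in cnbhd e x.
Proof.
move=> /stableP st0; rewrite /greedy_step; case: ifP => [_|/negbT/stableP ns].
  by exists x; rewrite ?setU11 // inE eqxx.
have [u /andP[uS exu]|none] := pickP [pred u | (u \in S0) && e x u].
  by exists u; rewrite // inE exu orbT.
exfalso; apply: ns => a b; rewrite !in_setU1.
have noadj y : y \in S0 -> ~~ e x y by move=> yS; move: (none y); rewrite /= yS /= => ->.
case/orP => [/eqP->|aS] /orP[/eqP->|bS]; last exact: st0.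
- by rewrite e_irr.
- exact: noadj.
- by rewrite e_sym noadj.
Qed.

Lemma greedy_dom (p q : seq T) (w : T) :
  exists2 u, u \in greedy_stable e (p ++ w :: q) :&: cnbhd e w & u \in rcons p w.
Proof.
have [u uS uN] := greedy_step_dom w (greedy_stable_stable p stable_set0).
exists u.
  rewrite inE uN andbT greedy_stableE foldl_cat /=.
  exact: subsetP (greedy_sub _ _) _ uS.
have : u \in foldl greedy_step set0 (rcons p w) by rewrite -cats1 foldl_cat.
by case/greedy_mem/orP; rewrite ?inE.
Qed.

Lemma stable_clique_unique (S K : {set T}) (x y : T) :
  stableb e S -> is_clique e K -> x \in S :&: K -> y \in S :&: K -> x = y.
Proof.
move=> /stableP st cK /setIP[xS xK] /setIP[yS yK].
by apply/eqP; apply: contraT => /(cK x y xK yK); move/negP: (st x y xS yS).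
Qed.

Lemma card_cnbhd (v : T) : #|cnbhd e v| = (deg e v).+1.
Proof.
have -> : cnbhd e v = v |: [set u | e v u] by apply/setP => u; rewrite !inE.
by rewrite cardsU1 inE e_irr.
Qed.

Lemma simplicial_cnbhd_sub (w v : T) :
  simplicial e w -> v \in cnbhd e w -> cnbhd e w \subset cnbhd e v.
Proof.
move=> sw vN; apply/subsetP => x xN; rewrite inE.
by case: (eqVneq x v) => //= xv; apply: sw; rewrite // eq_sym.
Qed.

Lemma linear_order_split (w : T) (sigma : seq T) :
  linear_order sigma -> exists p q, sigma = p ++ w :: q.
Proof.
move=> lin; have : w \in sigma by rewrite (perm_mem lin) mem_enum.
by case/splitPr => p q; exists p, q.
Qed.

Lemma degree_greedy_deg (sigma : seq T) (v w : T) :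
  degree_order e sigma -> v \in greedy_stable e sigma ->
  simplicial e w -> v \in cnbhd e w -> deg e v <= deg e w.
Proof.
move=> [lin pw] vS sw vN; rewrite leqNgt; apply/negP => lt_wv.
have [p [q sig]] := linear_order_split w lin.
have v_late : v \notin rcons p w.
  rewrite mem_rcons in_cons negb_or; apply/andP; split.
    by apply: contraTneq lt_wv => ->; rewrite ltnn.
  apply/negP => vp; move: pw; rewrite sig pairwise_cat => /and3P[/allrelP le _ _].
  by move: (le v w vp (mem_head _ _)); rewrite leqNgt lt_wv.
have [u uSN u_early] := greedy_dom p q w.
have stS := greedy_stable_stable sigma stable_set0.
rewrite -sig in uSN; rewrite greedy_stableE in vS.
have vSN : v \in foldl greedy_step set0 sigma :&: cnbhd e w by rewrite inE vS vN.
by move: v_late; rewrite -(stable_clique_unique stS sw uSN vSN) u_early.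
Qed.

End GreedyStable.

Theorem lemma9 (T : finType) (e : rel T)
  (e_sym : symmetric e) (e_irr : irreflexive e)
  (hcover : forall x : T, exists2 K : {set T}, simplicial_clique e K & x \in K)
  (S : {set T}) (hS : degree_greedy_stable e S) :
  (forall v, v \in S -> simplicial e v) /\
  (forall K : {set T}, simplicial_clique e K -> #|S :&: K| = 1).
Proof.
case: hS => sigma [lin pw] ->.
have stS : stableb e (greedy_stable e sigma) :=
  greedy_stable_stable sigma (stable_set0 e).
split.
  move=> v vS; have [_ [w sw ->] vN] := hcover v.
  have sub := simplicial_cnbhd_sub sw vN.
  have le_vw := degree_greedy_deg e_sym e_irr (conj lin pw) vS sw vN.
  have eqN : cnbhd e w = cnbhd e v by apply/eqP; rewrite eqEcard sub !card_cnbhd.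
  by rewrite /simplicial -eqN.
move=> K [w sw ->].
have [p [q sig]] := linear_order_split w lin.
have [u uSN _] := greedy_dom e_sym e_irr p q w; rewrite -sig in uSN.
have -> : greedy_stable e sigma :&: cnbhd e w = [set u].
  apply/setP => y; rewrite in_set1; apply/idP/eqP => [yS|->] //.
  exact: stable_clique_unique stS sw yS uSN.
exact: cards1.
Qed.
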